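(* Let $G$ be a finitely generated group with solvable word problem, and let $B$ be a left-free $G$-$G$-biset with finite basis $X$ whose structure map $X\times G\to G\times X$ is computable. Then there is an algorithm which terminates if and only if $B$ is contracting, and in that case returns the nucleus $N(B,X)$ (otherwise it runs forever).
   Context: A $G$-$G$-biset is a set with commuting left and right $G$-actions; it is left-free if the left action is free, and a basis $X$ is a set of representatives of the left orbits, so every $xg$ ($x\in X,g\in G$) is uniquely written $hy$ with $h\in G,y\in X$. Tensor powers: $B\otimes_G B=(B\times B)/(bg,c)\sim(b,gc)$, with basis $X^n$. $B$ is contracting if there is a finite $N\subseteq G$ such that for every $g\in G$ and all sufficiently large $n$, $X^{\otimes n}g\subseteq NX^{\otimes n}$; the nucleus $N(B,X)$ is the minimal such $N$. *)

(* Groups: [groupType] from mathcomp/boot/monoid.v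
   (possibly infinite groups; the carrier is a choiceType, hence has a
   decidable equality). *)
From HB Require Import structures.
From mathcomp Require Import all_boot.
From mathcomp Require Import monoid.

Set Implicit Arguments.
Unset Strict Implicit.
Unset Printing Implicit Defensive.

Local Open Scope group_scope.

Definition generates (G : groupType) (gens : seq G) : Prop :=
  forall g : G, exists s : seq G,
    all (fun a => (a \in gens) || (a^-1 \in gens)) s /\ g = foldr mul 1 s.

(* A left-free G-G-biset B with basis X is (up to isomorphism)          *)
(* B = G x X, with left action  h.(g,x) = (hg,x)  and right action     *)
(* given by the structure map sigma : X x G -> G x X,                  *)
(*     x g = h y   <=>   sigma x g = (h, y).                           *)
(* [biset_structure sigma] says that this is a right action (it then   *)
(* automatically commutes with the free left action).                  *)
Definition biset_structure (G : groupType) (X : finType)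
    (sigma : X -> G -> G * X) : Prop :=
  (forall x : X, sigma x 1 = (1, x)) /\
  (forall (x : X) (g h : G),
      sigma x (g * h) =
      let (g1, y) := sigma x g in
      let (h1, z) := sigma y h in (g1 * h1, z)).

(* Right action of G on the basis X^n of the tensor power B^{(x)n}:    *)
(* for v = x1 (x) ... (x) xn (the list [:: x1; ...; xn]) and g in G,    *)
(* [bact sigma v g = (h, w)] means  v g = h w  in B^{(x)n}.            *)
Fixpoint bact (G : groupType) (X : finType) (sigma : X -> G -> G * X)
    (v : seq X) (g : G) : G * seq X :=
  match v with
  | [::] => (g, [::])
  | x :: v' =>
      let (h, w) := bact sigma v' g in
      let (h', x') := sigma x h in (h', x' :: w)
  end.

Definition contracting_set (G : groupType) (X : finType)
    (sigma : X -> G -> G * X) (N : seq G) : Prop :=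
  forall g : G, exists m : nat, forall n : nat, m <= n ->
    forall v : seq X, size v = n -> (bact sigma v g).1 \in N.

Definition contracting (G : groupType) (X : finType)
    (sigma : X -> G -> G * X) : Prop :=
  exists N : seq G, contracting_set sigma N.

Definition is_nucleus (G : groupType) (X : finType)
    (sigma : X -> G -> G * X) (N : seq G) : Prop :=
  contracting_set sigma N /\
  forall N' : seq G, contracting_set sigma N' -> {subset N <= N'}.

(* The algorithm.  It only uses: equality test in G (solvable word     *)
(* problem), the group operations, the finite generating set, the      *)
(* finite basis X and the structure map sigma.  [nucleus_alg .. l] is  *)
(* the state of the algorithm after l stages: [None] = still running,  *)
(* [Some N] = halted with output N.                                    *)

Fixpoint words (X : finType) (n : nat) : seq (seq X) :=
  if n is n'.+1 then [seq x :: w | x <- enum X, w <- words X n'] else [:: [::]].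

Fixpoint prods (G : groupType) (A : seq G) (l : nat) : seq G :=
  if l is l'.+1 then undup (1 :: [seq a * b | a <- A, b <- prods A l'])
  else [:: 1].

Fixpoint subseqs (T : Type) (s : seq T) : seq (seq T) :=
  match s with
  | [::] => [:: [::]]
  | x :: s' => let r := subseqs s' in r ++ map (cons x) r
  end.

Definition letters (G : groupType) (gens : seq G) : seq G :=
  gens ++ map inv gens.

Definition valid_cert (G : groupType) (gens : seq G) (X : finType)
    (sigma : X -> G -> G * X) (M : seq G) (k : nat) : bool :=
  [&& all (fun a => a \in M) (1 :: letters gens),
      all (fun a => all (fun x => (sigma x a).1 \in M) (enum X)) M &
      all (fun a => all (fun b =>
             all (fun v => (bact sigma v (a * b)).1 \in M) (words X k)) M) M].

Definition prune (G : groupType) (X : finType) (sigma : X -> G -> G * X)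
    (C : seq G) : seq G :=
  [seq c <- C | has (fun d => has (fun x => (sigma x d).1 == c) (enum X)) C].

Definition core (G : groupType) (X : finType) (sigma : X -> G -> G * X)
    (M : seq G) : seq G :=
  iter (size M) (prune sigma) M.

Definition candidates (G : groupType) (gens : seq G) (l : nat)
    : seq (seq G * nat) :=
  [seq (M, k) | M <- subseqs (prods (letters gens) l), k <- iota 0 l.+1].

Definition nucleus_alg (G : groupType) (gens : seq G) (X : finType)
    (sigma : X -> G -> G * X) (l : nat) : option (seq G) :=
  match [seq p <- candidates gens l | valid_cert gens sigma p.1 p.2] with
  | [::] => None
  | p :: _ => Some (core sigma p.1)
  end.

From HB Require Import structures.
From mathcomp Require Import all_boot.
From mathcomp Require Import monoid.
From mathcomp Require Import zify.
From Stdlib Require Import Lia.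

(* A pair (M, k) accepted by [valid_cert] is a certificate of contraction:
   M is a finite restriction-closed set containing 1 and the generators,
   and restricting a product of two elements of M along any word of length
   k lands back in M.  By induction on the length t of a word in the
   generators, the restriction of such a word along any word of length at
   least t k then lies in M, so M is a contracting set.  Conversely, if N is
   contracting, the restrictions of the elements of N and of the generators
   form a finite restriction-closed set M, and products of two elements of M
   eventually restrict into N; such an M is a finite set of products of
   generators, so it is found at a finite stage of the enumeration.
   Finally the nucleus is the core of M: the elements of M that are
   restrictions of elements of M along words of every length, obtained by
   removing |M| times the elements with no preimage under a one-letter
   restriction. *)

Set Implicit Arguments.
Unset Strict Implicit.
Unset Printing Implicit Defensive.
Local Open Scope group_scope.

Lemma uniform_threshold (T : eqType) (P : T -> nat -> Prop) (s : seq T) :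
  (forall t, t \in s -> exists m, forall n, m <= n -> P t n) ->
  exists m, forall t, t \in s -> forall n, m <= n -> P t n.
Proof.
elim: s => [|a s IH] Hs; first by exists 0.
have [ma Ha] := Hs a (mem_head a s).
have [ms Hms] : exists m, forall t, t \in s -> forall n, m <= n -> P t n.
  by apply: IH => t Ht; apply: Hs; rewrite inE Ht orbT.
exists (maxn ma ms) => t; rewrite inE => /predU1P [->|Ht] n Hn.
  by apply: Ha; lia.
by apply: Hms => //; lia.
Qed.

Lemma mem_words (X : finType) n (v : seq X) : (v \in words X n) = (size v == n).
Proof.
elim: n v => [|n IH] v /=; first by rewrite mem_seq1 size_eq0.
apply/allpairsPdep/idP => [[x [w [_ Hw ->]]] | Hv].
  by rewrite /= eqSS -IH.
case: v Hv => // x w; rewrite /= eqSS -IH => Hw.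
by exists x, w; rewrite mem_enum.
Qed.

Lemma filter_subseqs (T : eqType) (p : pred T) (s : seq T) :
  filter p s \in subseqs s.
Proof.
elim: s => [|x s IH] /=; first by rewrite mem_seq1.
by rewrite mem_cat; case: (p x); rewrite ?IH ?map_f ?orbT.
Qed.

Section Restriction.

Variables (G : groupType) (X : finType) (sigma : X -> G -> G * X).

(* [restr v g] is the restriction g|_v, i.e. the h with v g = h w. *)
Definition restr (v : seq X) (g : G) : G := (bact sigma v g).1.

Lemma size_bact v g : size (bact sigma v g).2 = size v.
Proof.
elim: v => [|x v IH] //=; move: IH.
by case: (bact sigma v g) => h w /= IH; case: (sigma x h) => ? ? /=; rewrite IH.
Qed.

Lemma bact_cat u w g :
  bact sigma (u ++ w) g =
  ((bact sigma u (restr w g)).1, (bact sigma u (restr w g)).2 ++ (bact sigma w g).2).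
Proof.
rewrite /restr; elim: u => [|x u IH] /=; first by case: (bact sigma w g).
by rewrite IH; case: (bact sigma u _) => h w' /=; case: (sigma x h).
Qed.

Lemma restr_cat u w g : restr (u ++ w) g = restr u (restr w g).
Proof. by rewrite {1}/restr bact_cat. Qed.

Lemma restr_cons x v g : restr (x :: v) g = (sigma x (restr v g)).1.
Proof. by rewrite /restr /=; case: (bact sigma v g) => h w; case: (sigma x h). Qed.

Definition restr_closed (M : seq G) : Prop :=
  forall a x, a \in M -> (sigma x a).1 \in M.

Lemma restr_closed_restr M v a : restr_closed M -> a \in M -> restr v a \in M.
Proof. by move=> closedM Ha; elim: v => [|x v IH] //; rewrite restr_cons; apply: closedM. Qed.

Lemma contracting_threshold N (s : seq G) :
  contracting_set sigma N ->
  exists m, forall t v, t \in s -> m <= size v -> restr v t \in N.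
Proof.
move=> HN; have [m Hm] := uniform_threshold (s := s)
  (P := fun t n => forall v, size v = n -> restr v t \in N)
  (fun t _ => HN t).
by exists m => t v Ht Hv; apply: (Hm t Ht (size v) Hv).
Qed.

(* Restrictions along words longer than the contraction threshold fall
   into N, so only finitely many restrictions occur. *)
Lemma restr_closure N (S : seq G) :
  contracting_set sigma N ->
  exists M, [/\ restr_closed M, {subset N <= M} & {subset S <= M}].
Proof.
move=> HN; set S' := N ++ S.
have [m Hm] := contracting_threshold S' HN.
set M := [seq restr v s | s <- S', v <- flatten [seq words X i | i <- iota 0 m.+1]].
have short_restr s v : s \in S' -> size v <= m -> restr v s \in M.
  move=> Hs Hv; apply: (allpairs_f_dep (fun s v => restr v s)) => //.
  apply/flattenP; exists (words X (size v)); last by rewrite mem_words.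
  by apply: map_f; rewrite mem_iota.
have restrM s v : s \in S' -> restr v s \in M.
  move=> Hs; case: (leqP (size v) m) => [|/ltnW Hv]; first exact: short_restr.
  by apply: (short_restr _ [::]); rewrite ?mem_cat ?Hm.
exists M; split.
- move=> a x /allpairsPdep [s [v [Hs _ ->]]].
  by rewrite -restr_cons; apply: restrM.
- by move=> n Hn; apply: (restrM n [::]); rewrite mem_cat Hn.
- by move=> s Hs; apply: (restrM s [::]); rewrite mem_cat Hs orbT.
Qed.

Hypothesis sigma_biset : biset_structure sigma.

Lemma bact_mulg v a b :
  bact sigma v (a * b) =
  (restr v a * restr (bact sigma v a).2 b, (bact sigma (bact sigma v a).2 b).2).
Proof.
rewrite /restr; case: sigma_biset => _ sigmaM; elim: v => [|x v IH] //=.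
rewrite IH; case: (bact sigma v a) => h w /=.
rewrite sigmaM; case: (sigma x h) => g1 y /=.
by case: (bact sigma w b) => h2 w2 /=; case: (sigma y h2).
Qed.

Lemma restr_mulg v a b : restr v (a * b) = restr v a * restr (bact sigma v a).2 b.
Proof. by rewrite {1}/restr bact_mulg. Qed.

Section Certificate.

Variables (M : seq G) (k : nat).
Hypotheses (closedM : restr_closed M) (oneM : 1 \in M).
Hypothesis restr_mulM :
  forall a b v, a \in M -> b \in M -> size v = k -> restr v (a * b) \in M.

Lemma restr_mulg_mem n a b :
  a \in M -> (forall v, n <= size v -> restr v b \in M) ->
  forall v, n + k <= size v -> restr v (a * b) \in M.
Proof.
move=> Ha Hb v Hv; rewrite -(cat_take_drop k v) restr_cat restr_mulg.
have Hw : n <= size (drop k v) by rewrite size_drop; lia.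
apply: restr_mulM; first exact: restr_closed_restr.
  by apply: Hb; rewrite size_bact.
by rewrite size_take; case: ltnP; lia.
Qed.

Lemma restr_prod_mem t :
  {subset t <= M} -> forall v, (size t * k)%N <= size v -> restr v (foldr mul 1 t) \in M.
Proof.
elim: t => [|a t IH] /= sub_tM; first by move=> v _; apply: restr_closed_restr.
move=> v Hv; apply: (restr_mulg_mem (n := (size t * k)%N)); first exact/sub_tM/mem_head.
  by apply: IH => b Hb; apply/sub_tM/mem_behead.
by rewrite mulSn addnC in Hv.
Qed.

End Certificate.

End Restriction.

Lemma letters_generate (G : groupType) (gens : seq G) :
  generates gens -> forall g, exists t, {subset t <= letters gens} /\ g = foldr mul 1 t.
Proof.
move=> Hg g; have [t [Ht ->]] := Hg g; exists t; split => // a /(allP Ht) Ha.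
by rewrite /letters mem_cat -{2}(invgK a) (mem_map invg_inj).
Qed.

Section Algorithm.

Variables (G : groupType) (gens : seq G) (X : finType) (sigma : X -> G -> G * X).

Lemma valid_certP M k :
  reflect [/\ {subset 1 :: letters gens <= M}, restr_closed sigma M &
              forall a b v, a \in M -> b \in M -> size v = k -> restr sigma v (a * b) \in M]
          (valid_cert gens sigma M k).
Proof.
apply: (iffP and3P) => [[/allP oneM /allP closedM /allP mulM] | [oneM closedM mulM]].
  split=> // [a x Ha | a b v Ha Hb Hv].
    by apply: (allP (closedM a Ha)); rewrite mem_enum.
  by apply: (allP (allP (mulM a Ha) b Hb)); rewrite mem_words Hv.
split; first exact/allP.
  by apply/allP => a Ha; apply/allP => x _; apply: closedM.
apply/allP => a Ha; apply/allP => b Hb; apply/allP => v.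
by rewrite mem_words => /eqP; apply: mulM.
Qed.

Lemma certificate_contracting M k :
  generates gens -> biset_structure sigma -> valid_cert gens sigma M k ->
  contracting_set sigma M.
Proof.
move=> Hg Hb /valid_certP [oneM closedM mulM] g.
have [t [Ht ->]] := letters_generate Hg g.
exists ((size t * k)%N) => n Hn v Hv.
apply: (restr_prod_mem Hb closedM (oneM _ (mem_head _ _)) mulM); last by rewrite Hv.
by move=> a /Ht Ha; apply: oneM; rewrite inE Ha orbT.
Qed.

Lemma prodsS (A : seq G) l :
  prods A l.+1 = undup (1 :: [seq a * b | a <- A, b <- prods A l]).
Proof. by []. Qed.

Lemma prods1 (A : seq G) l : 1 \in prods A l.
Proof. by case: l => [|l]; rewrite ?prodsS ?mem_undup mem_head. Qed.

Lemma mem_prods (A : seq G) t l :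
  {subset t <= A} -> size t <= l -> foldr mul 1 t \in prods A l.
Proof.
elim: t l => [|a t IH] [|l] // sub_tA; rewrite ?prods1 // => Hl.
rewrite prodsS mem_undup inE; apply/orP; right.
apply: (allpairs_f_dep (fun a b => a * b)); first exact/sub_tA/mem_head.
by apply: IH => // b Hb; apply/sub_tA/mem_behead.
Qed.

Lemma mem_candidates (M : seq G) k l :
  {subset M <= prods (letters gens) l} -> k <= l ->
  exists M', (M', k) \in candidates gens l /\ M' =i M.
Proof.
move=> sMl Hk; exists [seq g <- prods (letters gens) l | g \in M]; split.
  apply/allpairsP; exists ([seq g <- prods (letters gens) l | g \in M], k).
  by rewrite filter_subseqs mem_iota.
move=> g; rewrite mem_filter; case: (boolP (g \in M)) => //= Hg.
exact: sMl.
Qed.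

Lemma contracting_certificate :
  generates gens -> contracting sigma ->
  exists l M k, (M, k) \in candidates gens l /\ valid_cert gens sigma M k.
Proof.
move=> Hg [N HN].
have [M [closedM sNM sSM]] := restr_closure (1 :: letters gens) HN.
have [k Hk] := contracting_threshold [seq a * b | a <- M, b <- M] HN.
have [l Hl] : exists l, forall g, g \in M -> forall n, l <= n ->
    g \in prods (letters gens) n.
  apply: uniform_threshold => g _; have [t [Ht ->]] := letters_generate Hg g.
  by exists (size t) => n; apply: mem_prods.
have [M' [HM' eqM']] := @mem_candidates M k (maxn l k)
  (fun g Hg => Hl g Hg _ (leq_maxl l k)) (leq_maxr l k).
exists (maxn l k), M', k; split => //; apply/valid_certP; split.
- by move=> a /sSM; rewrite eqM'.
- by move=> a x; rewrite !eqM'; apply: closedM.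
- move=> a b v; rewrite !eqM' => Ha Hb Hv; apply: sNM.
  by apply: Hk; rewrite ?Hv //; apply: allpairs_f.
Qed.

Lemma nucleus_alg_Some l N :
  nucleus_alg gens sigma l = Some N ->
  exists M k, valid_cert gens sigma M k /\ N = core sigma M.
Proof.
rewrite /nucleus_alg; case E: [seq _ <- _ | _] => [|[M k] s] // [<-].
exists M, k; split => //; have : (M, k) \in (M, k) :: s by rewrite mem_head.
by rewrite -E mem_filter => /andP [].
Qed.

Lemma nucleus_alg_halts l M k :
  (M, k) \in candidates gens l -> valid_cert gens sigma M k ->
  nucleus_alg gens sigma l <> None.
Proof.
move=> Hin Hv; rewrite /nucleus_alg.
have : (M, k) \in [seq p <- candidates gens l | valid_cert gens sigma p.1 p.2].
  by rewrite mem_filter Hv.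
by case: [seq _ <- _ | _].
Qed.

End Algorithm.

Section Core.

Variables (G : groupType) (X : finType) (sigma : X -> G -> G * X).

Lemma prune_id_or_shrinks (C : seq G) :
  prune sigma C = C \/ size (prune sigma C) < size C.
Proof.
rewrite /prune.
set p := fun c => has (fun d => has (fun x => (sigma x d).1 == c) (enum X)) C.
case: (boolP (all p C)) => Hall; first by left; apply/all_filterP.
right; rewrite size_filter ltn_neqAle count_size andbT.
by apply: contra Hall => /eqP; rewrite all_count => ->.
Qed.

(* Each pruning either stabilises or removes an element, so |M| rounds
   reach a fixed point. *)
Lemma prune_core M : prune sigma (core sigma M) = core sigma M.
Proof.
have stable i : prune sigma (iter i (prune sigma) M) = iter i (prune sigma) M \/
                size (iter i (prune sigma) M) + i <= size M.
  elim: i => [|i [E|Hs]] /=; [by right; rewrite addn0 | by left; rewrite !E |].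
  case: (prune_id_or_shrinks (iter i (prune sigma) M)) => [E|Hlt]; last by right; lia.
  by left; rewrite !E.
case: (stable (size M)) => // Hs.
have /size0nil -> : size (core sigma M) = 0 by rewrite /core; lia.
by [].
Qed.

Lemma core_restr_preimage M n c :
  c \in core sigma M ->
  exists d v, [/\ d \in core sigma M, size v = n & restr sigma v d = c].
Proof.
elim: n c => [|n IH] c Hc; first by exists c, [::].
move: Hc; rewrite -{1}prune_core mem_filter.
case/andP => /hasP [d Hd /hasP [x _ /eqP Hx]] _.
have [d' [v [Hd' Hv Ed]]] := IH d Hd.
by exists d', (x :: v); rewrite /= Hv restr_cons Ed Hx.
Qed.

Lemma restr_mem_iter_prune M i v d :
  restr_closed sigma M -> d \in M -> i <= size v ->
  restr sigma v d \in iter i (prune sigma) M.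
Proof.
move=> closedM Hd; elim: i v => [|i IH] v Hv; first exact: restr_closed_restr.
case: v Hv => // x v Hv; rewrite /= mem_filter IH ?(ltnW Hv) // andbT.
apply/hasP; exists (restr sigma v d); first exact: IH.
by apply/hasP; exists x; rewrite ?mem_enum // restr_cons.
Qed.

Lemma core_nucleus M :
  restr_closed sigma M -> contracting_set sigma M -> is_nucleus sigma (core sigma M).
Proof.
move=> closedM HM; split.
  move=> g; have [m Hm] := contracting_threshold [:: g] HM.
  exists (m + size M) => n Hn v Hv.
  rewrite -(cat_take_drop (size M) v) -/(restr _ _ _) restr_cat.
  apply: restr_mem_iter_prune => //; last by rewrite size_take; case: ltnP; lia.
  by apply: Hm; rewrite ?mem_head // size_drop; lia.
move=> N' HN' c Hc.
have [m Hm] := contracting_threshold (core sigma M) HN'.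
have [d [v [Hd Hv <-]]] := core_restr_preimage m Hc.
by apply: Hm; rewrite ?Hv.
Qed.

End Core.

Theorem proposition3p2 (G : groupType) (gens : seq G) (X : finType)
    (sigma : X -> G -> G * X) :
  generates gens -> biset_structure sigma ->
  (contracting sigma <-> exists l : nat, nucleus_alg gens sigma l <> None) /\
  (forall (l : nat) (N : seq G),
      nucleus_alg gens sigma l = Some N -> is_nucleus sigma N).
Proof.
move=> Hg Hb; split; [split|].
- case/(contracting_certificate Hg) => l [M [k [Hin Hv]]].
  by exists l; apply: nucleus_alg_halts Hin Hv.
- case=> l; case E: (nucleus_alg gens sigma l) => [N|] // _.
  have [M [k [Hv _]]] := nucleus_alg_Some E.
  by exists M; apply: certificate_contracting Hg Hb Hv.
- move=> l N /nucleus_alg_Some [M [k [Hv ->]]].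
  apply: core_nucleus; last exact: certificate_contracting Hg Hb Hv.
  by case/valid_certP: Hv.
Qed.
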